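(* Let $\mathcal{G}^{\mathbb{c}}=(\mathbb{C},\mathbb{E}^{\mathbb{c}})$ be a C-DMG and let $\mathbb{C}_\mathbb{X},\mathbb{C}_\mathbb{Y},\mathbb{C}_\mathbb{W}$ be pairwise disjoint subsets of $\mathbb{C}$; for a compatible ADMG write $\mathbb{X}=\bigcup_{C\in\mathbb{C}_\mathbb{X}}C$, $\mathbb{Y}=\bigcup_{C\in\mathbb{C}_\mathbb{Y}}C$, $\mathbb{W}=\bigcup_{C\in\mathbb{C}_\mathbb{W}}C$. Assume that either (i) the sizes of the clusters are unknown (so compatible ADMGs may have clusters of any nonempty sizes), or (ii) every cluster contains more than one variable. If $\mathbb{C}_\mathbb{X}$ and $\mathbb{C}_\mathbb{Y}$ are not d-separated by $\mathbb{C}_\mathbb{W}$ in $\mathcal{G}^{\mathbb{c}}$, then there exists an ADMG $\mathcal{G}=(\mathbb{V},\mathbb{E})$ compatible with $\mathcal{G}^{\mathbb{c}}$ (with clusters as in (i) or (ii)) in which $\mathbb{X}$ and $\mathbb{Y}$ are not d-separated by $\mathbb{W}$.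
   Context: An ADMG $\mathcal{G}=(\mathbb{V},\mathbb{E})$ is a graph on a finite vertex set $\mathbb{V}$ whose edges are directed edges $X\rightarrow Y$ and bidirected edges $X\leftrightarrow Y$, such that the directed edges form no directed cycle. A C-DMG $\mathcal{G}^{\mathbb{c}}=(\mathbb{C},\mathbb{E}^{\mathbb{c}})$ compatible with an ADMG $\mathcal{G}=(\mathbb{V},\mathbb{E})$ is the graph whose vertex set $\mathbb{C}=\{C_1,\dots,C_k\}$ is a partition of $\mathbb{V}$ (each vertex $C_i$ is a cluster of variables) and in which, for all $C_i,C_j\in\mathbb{C}$ (possibly $i=j$), $C_i\rightarrow C_j$ (resp. $C_i\leftrightarrow C_j$) is an edge iff there exist $X\in C_i$, $Y\in C_j$ with $X\rightarrow Y$ (resp. $X\leftrightarrow Y$) in $\mathbb{E}$; an ADMG is compatible with a C-DMG if the C-DMG arises from it in this way. A C-DMG may contain directed cycles and self-loops. In a graph $\mathcal{G}^*$ (ADMG or C-DMG), $\mathrm{De}(V)$ denotes the descendants of $V$ (including $V$ itself). A walk $\langle V_1,\dots,V_n\rangle$ is blocked by a set $\mathbb{W}^*$ if (1) $V_1\in\mathbb{W}^*$ or $V_n\in\mathbb{W}^*$; or (2) for some $1<i<n$, the walk contains $V_{i-1}\,*\!-\!*\,V_i\rightarrow V_{i+1}$ or $V_{i-1}\leftarrow V_i\,*\!-\!*\,V_{i+1}$ (any edge type for $*\!-\!*$) and $V_i\in\mathbb{W}^*$; or (3) for some $1<i<n$, the walk contains $V_{i-1}\,*\!\!\rightarrow V_i\leftarrow\!\!*\,V_{i+1}$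 (each edge directed into $V_i$ or bidirected) and $\mathrm{De}(V_i)\cap\mathbb{W}^*=\emptyset$. A walk that is not blocked is active. A path is a walk with no repeated vertex. $\mathbb{W}^*$ d-separates disjoint sets $\mathbb{X}^*$ and $\mathbb{Y}^*$ if it blocks every path from a vertex of $\mathbb{X}^*$ to a vertex of $\mathbb{Y}^*$. *)

From mathcomp Require Import all_boot.
Set Implicit Arguments. Unset Strict Implicit. Unset Printing Implicit Defensive.

Record mgraph (T : finType) := MGraph { dir : rel T; bid : rel T }.

Definition is_admg (T : finType) (G : mgraph T) : Prop :=
  (forall x y, bid G x y = bid G y x) /\
  (forall x, ~~ bid G x x) /\
  (forall x y, dir G x y -> ~~ connect (dir G) y x).

(* Kind of the edge between consecutive walk vertices V_{i-1}, V_i: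
   Fwd : V_{i-1} -> V_i ;  Bwd : V_{i-1} <- V_i ;  Bi : V_{i-1} <-> V_i. *)
Inductive ekind := Fwd | Bwd | Bi.

Definition edge_ok (T : finType) (G : mgraph T) (k : ekind) (x y : T) : bool :=
  match k with Fwd => dir G x y | Bwd => dir G y x | Bi => bid G x y end.

(* A walk starting at x given by the list of (edge kind, next vertex). *)
Fixpoint walk_ok (T : finType) (G : mgraph T) (x : T) (s : seq (ekind * T)) : bool :=
  match s with
  | [::] => true
  | (k, y) :: s' => edge_ok G k x y && walk_ok G y s'
  end.

Definition walk_verts (T : finType) (x : T) (s : seq (ekind * T)) : seq T :=
  x :: map snd s.

Definition blocked (T : finType) (G : mgraph T) (W : {set T})
    (x : T) (s : seq (ekind * T)) : Prop :=
  let vs := walk_verts x s in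
  let ks := map fst s in
  (x \in W \/ last x (map snd s) \in W) \/
  exists i, 0 < i < size s /\
    let v := nth x vs i in
    let kb := nth Bi ks i.-1 in  (* edge between V_{i-1} and V_i *)
    let ka := nth Bi ks i in     (* edge between V_i and V_{i+1} *)
    (((ka = Fwd \/ kb = Bwd) /\ v \in W) \/
     ((kb = Fwd \/ kb = Bi) /\ (ka = Bwd \/ ka = Bi) /\
      (forall w, connect (dir G) v w -> w \notin W))).

(* W d-separates X and Y: every path (walk without repeated vertex)
   from a vertex of X to a vertex of Y is blocked by W. *)
Definition dsep (T : finType) (G : mgraph T) (W X Y : {set T}) : Prop :=
  forall (x : T) (s : seq (ekind * T)),
    x \in X -> walk_ok G x s -> uniq (walk_verts x s) ->
    last x (map snd s) \in Y -> blocked G W x s.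

(* cl : V -> C assigns each variable its cluster; clusters are the fibres. *)
Definition cluster (V C : finType) (cl : V -> C) (c : C) : {set V} :=
  [set v | cl v == c].

Definition clift (V C : finType) (cl : V -> C) (S : {set C}) : {set V} :=
  [set v | cl v \in S].

Definition compatible (V C : finType) (G : mgraph V) (GC : mgraph C)
    (cl : V -> C) : Prop :=
  is_admg G /\
  (forall c, exists v, cl v = c) /\
  (forall ci cj, dir GC ci cj <-> exists x y, [/\ cl x = ci, cl y = cj & dir G x y]) /\
  (forall ci cj, bid GC ci cj <-> exists x y, [/\ cl x = ci, cl y = cj & bid G x y]).

(* Size assumption: multi = false : case (i), cluster sizes unknown (any
   nonempty size); multi = true : case (ii), every cluster has > 1 variable. *)
Definition compatible_sized (multi : bool) (V C : finType) (G : mgraph V)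
    (GC : mgraph C) (cl : V -> C) : Prop :=
  compatible G GC cl /\ (multi -> forall c, 1 < #|cluster cl c|).

From mathcomp Require Import all_boot zify.
From Stdlib Require Import Classical.
Set Implicit Arguments. Unset Strict Implicit. Unset Printing Implicit Defensive.

(** Unfold the C-DMG in time: the ADMG has the vertices (c, t) for t <= M,
    directed edges (c, t) -> (d, t') whenever c -> d and t < t', and
    bidirected edges between all distinct copies of c <-> d.  It is
    compatible with the C-DMG, with clusters of size M + 1 >= 2.  An active
    path of the C-DMG lifts to a path of the ADMG by going one layer up along
    a forward edge, one layer down along a backward edge and staying in the
    layer along a bidirected edge; its vertices lie in distinct clusters.
    Membership in W only depends on the cluster, so non-colliders behave as
    before; and since a directed path of the C-DMG can be replayed upwards
    from any low enough layer, a collider of the lift has a descendant in W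
    whenever its cluster does. *)

Lemma compatible_bid_sym (V C : finType) (G : mgraph V) (GC : mgraph C) (cl : V -> C) :
  compatible G GC cl -> forall c d, bid GC c d = bid GC d c.
Proof.
move=> [[Gsym _] [_ [_ GCbid]]] c d.
by apply/idP/idP => /GCbid [u [v [<- <- uv]]]; apply/GCbid; exists v, u; rewrite Gsym.
Qed.

Section WalkProjection.
Variables (V C : finType) (f : V -> C).

Definition proj_walk (s : seq (ekind * V)) : seq (ekind * C) :=
  [seq (e.1, f e.2) | e <- s].

Lemma map_fst_proj_walk s : map fst (proj_walk s) = map fst s.
Proof. by rewrite -map_comp. Qed.

Lemma map_snd_proj_walk s : map snd (proj_walk s) = map f (map snd s).
Proof. by rewrite -!map_comp. Qed.

Lemma walk_verts_proj_walk x s :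
  walk_verts (f x) (proj_walk s) = map f (walk_verts x s).
Proof. by rewrite /walk_verts map_snd_proj_walk. Qed.

Lemma last_proj_walk x s :
  last (f x) (map snd (proj_walk s)) = f (last x (map snd s)).
Proof. by rewrite map_snd_proj_walk last_map. Qed.

Lemma blocked_proj_walk (G : mgraph V) (GC : mgraph C) (W : {set C}) x s :
  {in walk_verts x s, forall v c, connect (dir GC) (f v) c ->
     exists2 w, connect (dir G) v w & f w = c} ->
  blocked G (clift f W) x s -> blocked GC W (f x) (proj_walk s).
Proof.
move=> desc_lift; rewrite /blocked walk_verts_proj_walk last_proj_walk.
rewrite map_fst_proj_walk size_map !inE.
case=> [[Wx | Wlast] | [i [/andP [i_gt0 i_lt] inner]]].
- by do 2 left.
- by left; right.
have i_verts : i < size (walk_verts x s) by rewrite /= size_map ltnS ltnW.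
right; exists i; split; first by rewrite i_gt0.
rewrite (nth_map x) //.
case: inner => [[kind vW] | [kind_in [kind_out no_desc]]].
  by left; split; last by move: vW; rewrite inE.
right; do 2 split => //.
move=> c /(desc_lift _ (mem_nth x i_verts)) [w vw <-].
by have := no_desc w vw; rewrite inE.
Qed.

End WalkProjection.

Section Layered.
Variables (C : finType) (GC : mgraph C) (M : nat).

Definition layer_dir : rel (C * 'I_M.+1)%type :=
  fun u v => dir GC u.1 v.1 && (u.2 < v.2).
Definition layer_bid : rel (C * 'I_M.+1)%type :=
  fun u v => bid GC u.1 v.1 && (u != v).
Definition layered : mgraph (C * 'I_M.+1)%type := MGraph layer_dir layer_bid.

Lemma layer_connect_le u v : connect layer_dir u v -> u.2 <= v.2.
Proof.
move/connectP => [p up ->]; elim: p u up => [|w p IH] u //= /andP [/andP [_ uw] wp].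
exact: leq_trans (ltnW uw) (IH w wp).
Qed.

Lemma connect_layer_path c p t : path (dir GC) c p -> t + size p <= M ->
  connect layer_dir (c, inord t) (last c p, inord (t + size p)).
Proof.
elim: p c t => [|d p IH] c t /=; first by rewrite addn0.
move=> /andP [cd dp] fits; apply: (connect_trans (y := (d, inord t.+1))).
  by apply: connect1; rewrite /layer_dir /= cd /= !inordK; lia.
by rewrite addnS -addSn; apply: IH => //; lia.
Qed.

(** Shortening the directed path to fewer than #|C| edges bounds the number of
    layers it climbs. *)
Lemma connect_layered (u : C * 'I_M.+1) d :
  connect (dir GC) u.1 d -> u.2 + #|C| <= M.+1 ->
  exists2 w, connect layer_dir u w & w.1 = d.
Proof.
case: u => c t /= /connectP [p cp ->] fits.
have [q cq uniq_q _] := shortenP cp.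
have size_q : size q < #|C| by move/card_uniqP: uniq_q => /= <-; apply: max_card.
exists (last c q, inord (t + size q)) => //.
rewrite -[in (c, t)](inord_val t); apply: connect_layer_path => //.
by rewrite -ltnS; apply: leq_trans fits; rewrite -addnS leq_add2l.
Qed.

Definition layer_step (k : ekind) (t : nat) : nat :=
  match k with Fwd => t.+1 | Bwd => t.-1 | Bi => t end.

Fixpoint lift_walk (t : nat) (s : seq (ekind * C)) : seq (ekind * (C * 'I_M.+1)%type) :=
  if s is (k, y) :: s' then
    let t' := layer_step k t in (k, (y, inord t')) :: lift_walk t' s'
  else [::].

Lemma proj_lift_walk t s : proj_walk fst (lift_walk t s) = s.
Proof. by elim: s t => [|[k y] s IH] t //=; rewrite IH. Qed.

Lemma lift_walk_layer_le x t s v : t + size s <= M ->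
  v \in walk_verts (x, inord t) (lift_walk t s) -> v.2 <= t + size s.
Proof.
elim: s x t => [|[k y] s IH] x t /= fits; rewrite inE.
  by move/eqP => ->; rewrite /= inordK; lia.
case/orP => [/eqP -> | v_in]; first by rewrite /= inordK; lia.
have := IH y (layer_step k t); rewrite /walk_verts => /(_ _ v_in).
by case: k {v_in} fits => /= fits le_v; lia.
Qed.

(** [size s <= t] keeps backward steps above layer 0 (where [t.-1] would truncate),
    and [uniq] keeps the two ends of a lifted bidirected edge distinct. *)
Lemma walk_ok_lift_walk x t s : walk_ok GC x s -> uniq (walk_verts x s) ->
  size s <= t -> t + size s <= M -> walk_ok layered (x, inord t) (lift_walk t s).
Proof.
elim: s x t => [|[k y] s IH] x t //= /andP [xy ys] /andP [x_notin uniq_s] low high.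
have x_neq_y : x != y by apply: contraNneq x_notin => ->; rewrite inE eqxx.
apply/andP; split; last by apply: IH => //; case: k {xy} => /=; lia.
case: k xy => /= xy; rewrite /layer_dir /layer_bid /= xy //=.
- by rewrite !inordK; lia.
- by rewrite !inordK; lia.
- by rewrite xpair_eqE negb_and x_neq_y.
Qed.

Hypothesis bid_sym : forall c d, bid GC c d = bid GC d c.

Lemma layered_admg : is_admg layered.
Proof.
split; [|split].
- by move=> u v; rewrite /= /layer_bid bid_sym eq_sym.
- by move=> u; rewrite /= /layer_bid eqxx andbF.
- move=> u v /andP [_ uv]; apply/negP => /layer_connect_le.
  by rewrite leqNgt uv.
Qed.

Hypothesis M_gt0 : 0 < M.

Lemma layered_compatible_sized multi : compatible_sized multi layered GC fst.
Proof.
have bottom_top : (ord0 : 'I_M.+1) != ord_max by rewrite -val_eqE /= eq_sym -lt0n.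
split.
  split; [exact: layered_admg | split; [by move=> c; exists (c, ord0) | split]].
  - move=> c d; split; last by move=> [u [v [<- <- /andP [cd _]]]].
    by move=> cd; exists (c, ord0), (d, ord_max); rewrite /= /layer_dir /= cd.
  - move=> c d; split; last by move=> [u [v [<- <- /andP [cd _]]]].
    move=> cd; exists (c, ord0), (d, ord_max).
    by rewrite /= /layer_bid /= cd xpair_eqE negb_and bottom_top orbT.
move=> _ c.
have two_copies : [set (c, ord0 : 'I_M.+1); (c, ord_max)] \subset cluster fst c.
  by apply/subsetP => v; rewrite !inE => /orP [] /eqP -> /=.
apply: leq_trans (subset_leq_card two_copies).
by rewrite cards2 xpair_eqE negb_and bottom_top orbT.
Qed.

End Layered.

Theorem theorem2 (C : finType) (GC : mgraph C) (CX CY CW : {set C}) (multi : bool)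
  (HGC : exists (V : finType) (G : mgraph V) (cl : V -> C),
           compatible_sized multi G GC cl)
  (HXY : [disjoint CX & CY]) (HXW : [disjoint CX & CW]) (HYW : [disjoint CY & CW])
  (Hnot : ~ dsep GC CW CX CY) :
  exists (V : finType) (G : mgraph V) (cl : V -> C),
    compatible_sized multi G GC cl /\
    ~ dsep G (clift cl CW) (clift cl CX) (clift cl CY).
Proof.
have [V [G [cl [compat_G _]]]] := HGC.
have [x [s [Xx walk_s uniq_s Ylast open_s]]] : exists x s, [/\ x \in CX,
    walk_ok GC x s, uniq (walk_verts x s), last x (map snd s) \in CY
    & ~ blocked GC CW x s].
  apply: NNPP => no_open; apply: Hnot => x s *; apply: NNPP => open.
  by apply: no_open; exists x, s.
(** The lift stays within layers [0, 2N]; #|C| more layers leave room to replay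
    directed paths of the C-DMG above it. *)
pose N := size s; pose M := N + N + #|C|.
have M_gt0 : 0 < M by apply/ltn_addl/card_gt0P; exists x.
exists (C * 'I_M.+1)%type, (layered GC M), fst.
split; first exact/layered_compatible_sized/M_gt0/(compatible_bid_sym compat_G).
pose x' := (x, inord N : 'I_M.+1); pose s' := lift_walk M N s.
have proj_s' : proj_walk fst s' = s by apply: proj_lift_walk.
move/(_ x' s') => blocked_s'; apply: open_s; rewrite -proj_s'.
apply: (@blocked_proj_walk _ _ fst (layered GC M) GC CW x' s').
  move=> v /lift_walk_layer_le layer_v c vc; apply: (connect_layered vc).
  by apply: leqW; rewrite leq_add2r; apply: layer_v; rewrite leq_addr.
apply: blocked_s'.
- by rewrite inE.
- by apply: walk_ok_lift_walk => //; rewrite /M; lia.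
- by apply: (map_uniq (f := fst)); rewrite -walk_verts_proj_walk proj_s'.
- by rewrite inE -(last_proj_walk fst) proj_s'.
Qed.
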